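(* Let $(M,d)$ and $(N,\rho)$ be complete pointed metric spaces. The set $\widehat{\mathrm{Lip}}_0(M,N):=\{\widehat f: f\in\mathrm{Lip}_0(M,N)\}$ is a closed subset of $\mathcal L(\mathcal F(M),\mathcal F(N))$ with respect to the weak operator topology; in particular it is also closed with respect to the strong operator topology.
   Context: A pointed metric space is a metric space with a distinguished point $0$. $\mathrm{Lip}_0(M,N)$ denotes the Lipschitz maps $f:M\to N$ with $f(0_M)=0_N$; $\mathrm{Lip}_0(M)=\mathrm{Lip}_0(M,\mathbb R)$ normed by the Lipschitz constant. $\delta_M:M\to\mathrm{Lip}_0(M)^*$, $\delta_M(x)(\varphi)=\varphi(x)$; $\mathcal F(M)$ is the norm-closed linear span of $\delta_M(M)$. For $f\in\mathrm{Lip}_0(M,N)$, $\widehat f:\mathcal F(M)\to\mathcal F(N)$ is the unique bounded linear operator with $\widehat f(\delta_M(x))=\delta_N(f(x))$. The weak operator topology on $\mathcal L(X,Y)$ is the topology of pointwise convergence of $T\mapsto\langle y^*,Tx\rangle$ for $x\in X$, $y^*\in Y^*$; the strong operator topology is that of pointwise norm convergence $T\mapsto Tx$. *)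

From Stdlib Require Import Reals Lra List.
Open Scope R_scope.


Record PMS := {
  carrier :> Type;
  dist : carrier -> carrier -> R;
  pt : carrier;
  dist_self : forall x, dist x x = 0;
  dist_sep : forall x y, dist x y = 0 -> x = y;
  dist_sym : forall x y, dist x y = dist y x;
  dist_tri : forall x y z, dist x z <= dist x y + dist y z
}.

Definition complete (M : PMS) : Prop :=
  forall u : nat -> M,
    (forall eps, 0 < eps -> exists n0, forall m n, (n0 <= m)%nat -> (n0 <= n)%nat ->
        dist M (u m) (u n) < eps) ->
    exists l : M, forall eps, 0 < eps -> exists n0, forall n, (n0 <= n)%nat ->
        dist M (u n) l < eps.

Definition lipL (M : PMS) (L : R) (phi : M -> R) : Prop :=
  phi (pt M) = 0 /\ forall x y, Rabs (phi x - phi y) <= L * dist M x y.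

Definition lip0 (M : PMS) (phi : M -> R) : Prop := exists L, lipL M L phi.

Definition lip0_map (M N : PMS) (f : M -> N) : Prop :=
  f (pt M) = pt N /\ exists L, forall x y, dist N (f x) (f y) <= L * dist M x y.

(** Functionals on Lip_0(M) (only their values on Lip_0(M) matter). *)
Definition functional (M : PMS) := (M -> R) -> R.

Definition in_dual (M : PMS) (mu : functional M) : Prop :=
  (forall phi psi a b, lip0 M phi -> lip0 M psi ->
     mu (fun x => a * phi x + b * psi x) = a * mu phi + b * mu psi) /\
  (exists C, forall phi L, 0 <= L -> lipL M L phi -> Rabs (mu phi) <= C * L).

Definition feq (M : PMS) (mu nu : functional M) : Prop :=
  forall phi, lip0 M phi -> mu phi = nu phi.

Definition normle (M : PMS) (mu : functional M) (r : R) : Prop :=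
  forall phi, lipL M 1 phi -> Rabs (mu phi) <= r.

Definition fsub (M : PMS) (mu nu : functional M) : functional M :=
  fun phi => mu phi - nu phi.
Definition flin (M : PMS) (a : R) (mu : functional M) (b : R) (nu : functional M)
  : functional M := fun phi => a * mu phi + b * nu phi.

Definition delta (M : PMS) (x : M) : functional M := fun phi => phi x.

Definition molecule (M : PMS) (l : list (R * M)) : functional M :=
  fun phi => fold_right (fun p acc => fst p * phi (snd p) + acc) 0 l.

(** mu in F(M) = norm-closed linear span of delta_M(M) in Lip_0(M)^*. *)
Definition in_free (M : PMS) (mu : functional M) : Prop :=
  in_dual M mu /\
  forall eps, 0 < eps -> exists l, normle M (fsub M mu (molecule M l)) eps.

Definition operator (M N : PMS) := functional M -> functional N.

Definition bounded_op (M N : PMS) (T : operator M N) : Prop :=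
  (forall mu, in_free M mu -> in_free N (T mu)) /\
  (forall mu nu, in_free M mu -> in_free M nu -> feq M mu nu -> feq N (T mu) (T nu)) /\
  (forall mu nu a b, in_free M mu -> in_free M nu ->
      feq N (T (flin M a mu b nu)) (flin N a (T mu) b (T nu))) /\
  (exists C, forall mu r, in_free M mu -> normle M mu r -> normle N (T mu) (C * r)).

Definition in_free_dual (N : PMS) (ys : functional N -> R) : Prop :=
  (forall nu1 nu2, in_free N nu1 -> in_free N nu2 -> feq N nu1 nu2 -> ys nu1 = ys nu2) /\
  (forall nu1 nu2 a b, in_free N nu1 -> in_free N nu2 ->
      ys (flin N a nu1 b nu2) = a * ys nu1 + b * ys nu2) /\
  (exists C, forall nu r, in_free N nu -> normle N nu r -> Rabs (ys nu) <= C * r).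

Definition in_Lip_hat (M N : PMS) (T : operator M N) : Prop :=
  bounded_op M N T /\
  exists f : M -> N, lip0_map M N f /\
    forall x, feq N (T (delta M x)) (delta N (f x)).

(** T lies in the weak-operator-topology closure of S (inside L(F(M),F(N))):
    every basic WOT neighbourhood of T meets S. *)
Definition wot_adherent (M N : PMS) (S : operator M N -> Prop) (T : operator M N) : Prop :=
  forall (l : list (functional M * (functional N -> R))) (eps : R),
    0 < eps ->
    (forall p, In p l -> in_free M (fst p) /\ in_free_dual N (snd p)) ->
    exists T', S T' /\ bounded_op M N T' /\
      forall p, In p l -> Rabs (snd p (T' (fst p)) - snd p (T (fst p))) < eps.

Definition sot_adherent (M N : PMS) (S : operator M N -> Prop) (T : operator M N) : Prop :=
  forall (l : list (functional M)) (eps : R),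
    0 < eps ->
    (forall mu, In mu l -> in_free M mu) ->
    exists T', S T' /\ bounded_op M N T' /\
      forall mu, In mu l -> normle N (fsub N (T' mu) (T mu)) eps.

From Pilot Require Import Defs.
From Stdlib Require Import Reals.
From Stdlib Require Import Lra Lia List ClassicalEpsilon.
(* Re-import so that [Defs.dist] shadows the [dist] of the real-number library. *)
Import Defs ListNotations.
Open Scope R_scope.

(** Let [T] be WOT- or SOT-adherent to that set.  For each [x], the functional
    [mu := T (delta x)] in F(N) is then a weak* limit of point evaluations
    [delta (f' x)], tested against finitely many 1-Lipschitz functions at a time
    ([approximable_by_points]).  The heart of the proof shows that such a [mu]
    is itself a point evaluation when [N] is complete: its "distance profile"
    [z |-> mu (d(., z) - d(0, z)) + d(0, z)] behaves like [d(y, z)] for a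
    virtual point [y]; it is 1-Lipschitz, dominates the metric in the sense
    [d(z,w) <= r z + r w], and has infimum 0 because [mu] is close to a finitely
    supported molecule.  Such a function vanishes at some point of a complete
    space, and [mu] is the evaluation at that point.  Choosing these points
    defines [f], and boundedness of [T] makes [f] a base-point preserving
    Lipschitz map with [T = f^]. *)

Lemma Rabs_le_between (x e : R) : Rabs x <= e -> - e <= x <= e.
Proof. unfold Rabs; destruct (Rcase_abs x); lra. Qed.

Lemma inv_succ_eventually_lt (e : R) :
  0 < e -> exists n0, forall n, (n0 <= n)%nat -> / INR (S n) < e.
Proof.
  intros He. destruct (archimed_cor1 e He) as [n0 [Hn0 Hpos]].
  exists n0. intros n Hn. eapply Rle_lt_trans; [|exact Hn0].
  apply Rinv_le_contravar; [apply lt_0_INR; lia | apply le_INR; lia].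
Qed.

Lemma dist_nonneg (N : PMS) (x y : N) : 0 <= dist N x y.
Proof.
  pose proof (dist_tri N x y x) as H. rewrite dist_self, (dist_sym N y x) in H. lra.
Qed.

Lemma dist_reverse_triangle (N : PMS) (a b z : N) :
  Rabs (dist N a z - dist N b z) <= dist N a b.
Proof.
  pose proof (dist_tri N a b z). pose proof (dist_tri N b a z).
  rewrite (dist_sym N b a) in *. apply Rabs_le; lra.
Qed.

(** A function [r] that is 1-Lipschitz, dominates the metric
    ([d(z,w) <= r z + r w]) and has infimum 0 on a complete space vanishes
    somewhere: a minimizing sequence is Cauchy and [r] is 0 at its limit. *)
Lemma katetov_zero (N : PMS) (r : N -> R) :
  complete N ->
  (forall z w, dist N z w <= r z + r w) ->
  (forall z w, r z <= r w + dist N z w) ->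
  (forall e, 0 < e -> exists z, r z < e) ->
  exists y, r y = 0.
Proof.
  intros hN Hdom Hlip Hinf.
  destruct (choice (fun n z => r z < / INR (S n))) as [u Hu].
  { intro n. apply Hinf, Rinv_0_lt_compat, lt_0_INR; lia. }
  destruct (hN u) as [y Hy].
  { intros e He. destruct (inv_succ_eventually_lt (e / 2)) as [n0 Hn0]; [lra|].
    exists n0. intros m n Hm Hn.
    specialize (Hdom (u m) (u n)). specialize (Hn0 m Hm) as Hm'. specialize (Hn0 n Hn).
    specialize (Hu m) as Hum. specialize (Hu n). lra. }
  exists y. apply Rle_antisym.
  - apply Rle_plus_epsilon. intros e He.
    destruct (Hy (e / 2)) as [n1 Hn1]; [lra|].
    destruct (inv_succ_eventually_lt (e / 2)) as [n0 Hn0]; [lra|].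
    set (n := Nat.max n1 n0).
    specialize (Hn1 n (Nat.le_max_l _ _)). specialize (Hn0 n (Nat.le_max_r _ _)).
    specialize (Hu n). specialize (Hlip y (u n)).
    rewrite (dist_sym N y (u n)) in Hlip. lra.
  - specialize (Hdom y y). rewrite dist_self in Hdom. lra.
Qed.

(** [d(., z) - d(0, z)]: its value under a point evaluation at [y] recovers [d(y, z)]. *)
Definition centered_dist (N : PMS) (z : N) : N -> R :=
  fun y => dist N y z - dist N (pt N) z.

Lemma centered_dist_lip (N : PMS) (z : N) : lipL N 1 (centered_dist N z).
Proof.
  unfold centered_dist. split; [ring|].
  intros a b. rewrite Rmult_1_l.
  replace (dist N a z - dist N (pt N) z - (dist N b z - dist N (pt N) z))
    with (dist N a z - dist N b z) by ring.
  apply dist_reverse_triangle.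
Qed.

Definition dist_to_finite (N : PMS) (S : list N) (y : N) : R :=
  fold_right (fun s acc => Rmin (dist N y s) acc) (dist N y (pt N)) S.

Lemma dist_to_finite_le (N : PMS) (S : list N) (y s : N) :
  In s (pt N :: S) -> dist_to_finite N S y <= dist N y s.
Proof.
  induction S as [|a S IH]; simpl.
  - intros [<-|[]]; lra.
  - intros [<-|[<-|Hin]].
    + eapply Rle_trans; [apply Rmin_r|]. apply IH; now left.
    + apply Rmin_l.
    + eapply Rle_trans; [apply Rmin_r|]. apply IH; now right.
Qed.

Lemma dist_to_finite_attained (N : PMS) (S : list N) (y : N) :
  exists s, In s (pt N :: S) /\ dist_to_finite N S y = dist N y s.
Proof.
  induction S as [|a S [s [Hs Heq]]]; simpl.
  - exists (pt N); auto.
  - unfold Rmin. destruct (Rle_dec (dist N y a) (dist_to_finite N S y)).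
    + exists a; simpl; auto.
    + exists s; split; [destruct Hs; simpl; auto | exact Heq].
Qed.

Lemma dist_to_finite_vanishes (N : PMS) (S : list N) (s : N) :
  In s S -> dist_to_finite N S s = 0.
Proof.
  intros Hs. destruct (dist_to_finite_attained N S s) as [t [_ Heq]].
  pose proof (dist_to_finite_le N S s s (or_intror Hs)).
  pose proof (dist_nonneg N s t). rewrite dist_self in *. lra.
Qed.

Lemma dist_to_finite_lip (N : PMS) (S : list N) : lipL N 1 (dist_to_finite N S).
Proof.
  split.
  - destruct (dist_to_finite_attained N S (pt N)) as [t [_ Heq]].
    pose proof (dist_to_finite_le N S (pt N) (pt N) (or_introl eq_refl)).
    pose proof (dist_nonneg N (pt N) t). rewrite dist_self in *. lra.
  - intros a b. rewrite Rmult_1_l. induction S as [|c S IH]; simpl.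
    + apply dist_reverse_triangle.
    + pose proof (Rabs_le_between _ _ (dist_reverse_triangle N a b c)).
      apply Rabs_le_between in IH. apply Rabs_le.
      unfold Rmin; repeat destruct Rle_dec; lra.
Qed.

Lemma molecule_vanishing (N : PMS) (l : list (R * N)) (phi : N -> R) :
  (forall p, In p l -> phi (snd p) = 0) -> molecule N l phi = 0.
Proof.
  unfold molecule. induction l as [|p l IH]; intros Hvan; simpl; [reflexivity|].
  rewrite (Hvan p (or_introl eq_refl)), IH; [ring|].
  intros q Hq. apply Hvan. now right.
Qed.

(** [mu] is a weak* limit of point evaluations, tested against finitely many
    functions of the unit ball of Lip_0(N) at a time. *)
Definition approximable_by_points (N : PMS) (mu : functional N) : Prop :=
  forall (phis : list (N -> R)) (eps : R), 0 < eps ->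
    (forall phi, In phi phis -> lipL N 1 phi) ->
    exists y, forall phi, In phi phis -> Rabs (phi y - mu phi) < eps.

(** For [mu = delta y] this is [z |-> d(y, z)]. *)
Definition dist_profile (N : PMS) (mu : functional N) (z : N) : R :=
  mu (centered_dist N z) + dist N (pt N) z.

Section DistProfile.

Variables (N : PMS) (mu : functional N).
Hypothesis mu_approx : approximable_by_points N mu.

Let r := dist_profile N mu.

Lemma dist_profile_approx2 (z w : N) (eps : R) : 0 < eps ->
  exists y, Rabs (dist N y z - r z) < eps /\ Rabs (dist N y w - r w) < eps.
Proof.
  intros He.
  destruct (mu_approx [centered_dist N z; centered_dist N w] eps He) as [y Hy].
  { intros phi [<-|[<-|[]]]; apply centered_dist_lip. }
  exists y. unfold r, dist_profile.
  specialize (Hy (centered_dist N z) (or_introl eq_refl)) as Hz.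
  specialize (Hy (centered_dist N w) (or_intror (or_introl eq_refl))) as Hw.
  change (centered_dist N z y) with (dist N y z - dist N (pt N) z) in Hz.
  change (centered_dist N w y) with (dist N y w - dist N (pt N) w) in Hw.
  split.
  - replace (dist N y z - _) with (dist N y z - dist N (pt N) z - mu (centered_dist N z))
      by ring. exact Hz.
  - replace (dist N y w - _) with (dist N y w - dist N (pt N) w - mu (centered_dist N w))
      by ring. exact Hw.
Qed.

Lemma dist_profile_dominates (z w : N) : dist N z w <= r z + r w.
Proof.
  apply Rle_plus_epsilon. intros d Hd.
  destruct (dist_profile_approx2 z w (d / 2)) as [y [Hz Hw]]; [lra|].
  apply Rabs_def2 in Hz; apply Rabs_def2 in Hw.
  pose proof (dist_tri N z y w). rewrite (dist_sym N z y) in *. lra.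
Qed.

Lemma dist_profile_lip (z w : N) : r z <= r w + dist N z w.
Proof.
  apply Rle_plus_epsilon. intros d Hd.
  destruct (dist_profile_approx2 z w (d / 2)) as [y [Hz Hw]]; [lra|].
  apply Rabs_def2 in Hz; apply Rabs_def2 in Hw.
  pose proof (dist_tri N y w z). rewrite (dist_sym N w z) in *. lra.
Qed.

(** Being close to a molecule supported in [S], [mu] nearly annihilates the
    distance to [S]; an approximating point is thus close to some [s] in
    [{0} U S], where the profile is then small. *)
Lemma dist_profile_inf_zero :
  in_free N mu -> forall eps, 0 < eps -> exists z, r z < eps.
Proof.
  intros Hfree eps He. destruct (proj2 Hfree (eps / 3)) as [l Hl]; [lra|].
  set (h := dist_to_finite N (map snd l)).
  assert (Hh : Rabs (mu h) <= eps / 3).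
  { specialize (Hl h (dist_to_finite_lip N _)). unfold fsub in Hl.
    rewrite molecule_vanishing, Rminus_0_r in Hl; [exact Hl|].
    intros p Hp. apply dist_to_finite_vanishes, in_map, Hp. }
  destruct (mu_approx (h :: map (centered_dist N) (pt N :: map snd l)) (eps / 3))
    as [y Hy]; [lra| |].
  { intros phi [<-|Hin]; [apply dist_to_finite_lip|].
    apply in_map_iff in Hin as [z [<- _]]. apply centered_dist_lip. }
  destruct (dist_to_finite_attained N (map snd l) y) as [s [Hs Hys]].
  exists s. unfold r, dist_profile.
  pose proof (Rabs_def2 _ _ (Hy h (or_introl eq_refl))) as Hyh.
  pose proof (Rabs_def2 _ _ (Hy (centered_dist N s) (or_intror (in_map _ _ _ Hs)))) as Hys'.
  apply Rabs_le_between in Hh.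
  change (centered_dist N s y) with (dist N y s - dist N (pt N) s) in Hys'. unfold h in *. lra.
Qed.

Lemma eval_at_profile_zero (y : N) :
  r y = 0 -> forall phi, lipL N 1 phi -> mu phi = phi y.
Proof.
  intros Hry phi Hphi.
  enough (Rabs (mu phi - phi y) <= 0) as H by (apply Rabs_le_between in H; lra).
  apply Rle_plus_epsilon. intros d Hd.
  destruct (mu_approx [phi; centered_dist N y] (d / 2)) as [y' Hy']; [lra| |].
  { intros f [<-|[<-|[]]]; [exact Hphi | apply centered_dist_lip]. }
  pose proof (Rabs_def2 _ _ (Hy' phi (or_introl eq_refl))) as H1.
  pose proof (Rabs_def2 _ _ (Hy' _ (or_intror (or_introl eq_refl)))) as H2.
  pose proof (Rabs_le_between _ _ (proj2 Hphi y' y)) as H3.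
  change (centered_dist N y y') with (dist N y' y - dist N (pt N) y) in H2. unfold r, dist_profile in Hry.
  apply Rabs_le. lra.
Qed.

End DistProfile.

Lemma dual_eq_delta_of_unit_ball (M : PMS) (mu : functional M) (y : M) :
  in_dual M mu -> (forall phi, lipL M 1 phi -> mu phi = phi y) ->
  feq M mu (delta M y).
Proof.
  intros [Hlin _] Hball phi [L [H0 HL]]. unfold delta.
  set (K := Rabs L + 1).
  assert (HK : 0 < K) by (unfold K; pose proof (Rabs_pos L); lra).
  set (phiK := fun x => / K * phi x + 0 * phi x).
  assert (HphiK : lipL M 1 phiK).
  { unfold phiK. split; [rewrite H0; ring|]. intros a b.
    replace (_ - _) with (/ K * (phi a - phi b)) by ring.
    rewrite Rabs_mult, (Rabs_pos_eq (/ K)) by (apply Rlt_le, Rinv_0_lt_compat, HK).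
    replace (1 * dist M a b) with (/ K * (K * dist M a b)) by (field; lra).
    apply Rmult_le_compat_l; [apply Rlt_le, Rinv_0_lt_compat, HK|].
    eapply Rle_trans; [apply HL|]. apply Rmult_le_compat_r; [apply dist_nonneg|].
    unfold K; pose proof (Rle_abs L); lra. }
  assert (Hphi : lip0 M phi) by (exists L; split; assumption).
  pose proof (Hball phiK HphiK) as E. unfold phiK in E at 1.
  rewrite (Hlin phi phi (/ K) 0 Hphi Hphi) in E. unfold phiK in E.
  apply Rmult_eq_reg_l with (/ K); [lra | apply Rinv_neq_0_compat; lra].
Qed.

Lemma approximable_is_delta (N : PMS) (mu : functional N) :
  complete N -> in_free N mu -> approximable_by_points N mu ->
  exists y, feq N mu (delta N y).
Proof.
  intros hN Hfree Happ.
  destruct (katetov_zero N (dist_profile N mu) hN) as [y Hy].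
  - apply dist_profile_dominates, Happ.
  - apply dist_profile_lip, Happ.
  - apply dist_profile_inf_zero; assumption.
  - exists y. apply dual_eq_delta_of_unit_ball; [apply Hfree|].
    apply eval_at_profile_zero; assumption.
Qed.

Lemma delta_in_free (M : PMS) (x : M) : in_free M (delta M x).
Proof.
  split; [split|].
  - intros. reflexivity.
  - exists (dist M x (pt M)). intros phi L _ [H0 HL]. unfold delta.
    specialize (HL x (pt M)). rewrite H0, Rminus_0_r, Rmult_comm in HL. exact HL.
  - intros eps He. exists [(1, x)]. intros phi _. unfold fsub, molecule, delta; simpl.
    replace (phi x - (1 * phi x + 0)) with 0 by ring. rewrite Rabs_R0. lra.
Qed.

Definition delta_diff (M : PMS) (x x' : M) : functional M :=
  flin M 1 (delta M x) (-1) (delta M x').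

Lemma delta_diff_in_free (M : PMS) (x x' : M) : in_free M (delta_diff M x x').
Proof.
  unfold delta_diff, flin, delta. split; [split|].
  - intros. ring.
  - exists (dist M x x'). intros phi L _ [_ HL].
    replace (1 * phi x + -1 * phi x') with (phi x - phi x') by ring.
    rewrite Rmult_comm. apply HL.
  - intros eps He. exists [(1, x); (-1, x')]. intros phi _. unfold fsub, molecule; simpl.
    replace (_ - _) with 0 by ring. rewrite Rabs_R0. lra.
Qed.

Lemma delta_diff_normle (M : PMS) (x x' : M) :
  normle M (delta_diff M x x') (dist M x x').
Proof.
  intros phi [_ HL]. unfold delta_diff, flin, delta.
  replace (1 * phi x + -1 * phi x') with (phi x - phi x') by ring.
  rewrite <- (Rmult_1_l (dist M x x')). apply HL.
Qed.

Lemma eval_in_free_dual (N : PMS) (phi : N -> R) :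
  lipL N 1 phi -> in_free_dual N (fun nu => nu phi).
Proof.
  intros Hphi. split; [|split].
  - intros nu1 nu2 _ _ Heq. apply Heq. exists 1. exact Hphi.
  - intros. reflexivity.
  - exists 1. intros nu r _ Hnu. rewrite Rmult_1_l. apply Hnu, Hphi.
Qed.

Lemma wot_adherent_approximable (M N : PMS) (T : operator M N) (x : M) :
  wot_adherent M N (in_Lip_hat M N) T -> approximable_by_points N (T (delta M x)).
Proof.
  intros Hadh phis eps He Hphis.
  set (test := fun phi : N -> R => (delta M x, fun nu : functional N => nu phi)).
  destruct (Hadh (map test phis) eps He) as [T' [[_ [f' [_ Hf']]] [_ HT']]].
  { intros p Hp. apply in_map_iff in Hp as [phi [<- Hin]].
    split; [apply delta_in_free | apply eval_in_free_dual, Hphis, Hin]. }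
  exists (f' x). intros phi Hin.
  specialize (HT' _ (in_map test _ _ Hin)). simpl in HT'.
  rewrite (Hf' x phi) in HT'; [exact HT'|]. exists 1. apply Hphis, Hin.
Qed.

Lemma sot_adherent_approximable (M N : PMS) (T : operator M N) (x : M) :
  sot_adherent M N (in_Lip_hat M N) T -> approximable_by_points N (T (delta M x)).
Proof.
  intros Hadh phis eps He Hphis.
  destruct (Hadh [delta M x] (eps / 2)) as [T' [[_ [f' [_ Hf']]] [_ HT']]]; [lra| |].
  { intros mu [<-|[]]. apply delta_in_free. }
  exists (f' x). intros phi Hin.
  specialize (HT' _ (or_introl eq_refl) phi (Hphis _ Hin)). unfold fsub in HT'.
  rewrite (Hf' x phi) in HT' by (exists 1; apply Hphis, Hin).
  eapply Rle_lt_trans; [exact HT' | lra].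
Qed.

Lemma point_image_lip0_map (M N : PMS) (T : operator M N) (f : M -> N) :
  bounded_op M N T -> (forall x, feq N (T (delta M x)) (delta N (f x))) ->
  lip0_map M N f.
Proof.
  intros [_ [_ [Hlin [C HC]]]] Hf.
  assert (Hf1 : forall x phi, lipL N 1 phi -> T (delta M x) phi = phi (f x))
    by (intros x phi Hphi; apply Hf; exists 1; exact Hphi).
  split.
  - assert (Hzero : normle M (delta M (pt M)) 0).
    { intros phi [H0 _]. unfold delta. rewrite H0, Rabs_R0. lra. }
    set (phi := fun z => dist N z (pt N)).
    assert (Hphi : lipL N 1 phi).
    { split; [apply dist_self|]. intros a b. rewrite Rmult_1_l. apply dist_reverse_triangle. }
    pose proof (HC _ _ (delta_in_free M (pt M)) Hzero phi Hphi) as Hbound.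
    rewrite Hf1 in Hbound by exact Hphi. apply Rabs_le_between in Hbound.
    apply dist_sep. unfold phi in Hbound. pose proof (dist_nonneg N (f (pt M)) (pt N)). lra.
  - exists C. intros x x'.
    set (phi := centered_dist N (f x')).
    pose proof (HC _ _ (delta_diff_in_free M x x') (delta_diff_normle M x x') phi
                  (centered_dist_lip N _)) as Hbound.
    unfold delta_diff in Hbound.
    rewrite (Hlin _ _ 1 (-1) (delta_in_free M x) (delta_in_free M x')) in Hbound
      by (exists 1; apply centered_dist_lip).
    unfold flin in Hbound. rewrite !Hf1 in Hbound by apply centered_dist_lip.
    unfold phi, centered_dist in Hbound. rewrite dist_self in Hbound.
    replace (_ + _) with (dist N (f x) (f x')) in Hbound by ring.
    rewrite Rabs_pos_eq in Hbound by apply dist_nonneg. exact Hbound.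
Qed.

Lemma approximable_images_Lip_hat (M N : PMS) (T : operator M N) :
  complete N -> bounded_op M N T ->
  (forall x, approximable_by_points N (T (delta M x))) -> in_Lip_hat M N T.
Proof.
  intros hN HT Happ.
  destruct (choice (fun x y => feq N (T (delta M x)) (delta N y))) as [f Hf].
  { intro x. apply approximable_is_delta; [exact hN | | apply Happ].
    apply (proj1 HT), delta_in_free. }
  split; [exact HT|]. exists f. split; [|exact Hf].
  apply (point_image_lip0_map M N T f HT Hf).
Qed.

Theorem corollary6p4 (M N : PMS) (hM : complete M) (hN : complete N) :
  (forall T : operator M N, bounded_op M N T ->
     wot_adherent M N (in_Lip_hat M N) T -> in_Lip_hat M N T) /\
  (forall T : operator M N, bounded_op M N T ->
     sot_adherent M N (in_Lip_hat M N) T -> in_Lip_hat M N T).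
Proof.
  split; intros T HT Hadh; apply approximable_images_Lip_hat; try assumption.
  - intro x. apply wot_adherent_approximable, Hadh.
  - intro x. apply sot_adherent_approximable, Hadh.
Qed.
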